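(* Let $a$ be a positive integer, $\beta\in[0,1]$, and $r:=(\phi^{\beta/a}-1)/(\phi^{1/a}-1)$. For an integer $n>1$ write $\mathfrak F^{-1}(n^a)=m+p$ with $m\in\mathbb{N}$ and $p=\{\mathfrak F^{-1}(n^a)\}$, and let $P_n:=\#\{k\le n:\{\mathfrak F^{-1}(k^a)\}\le\beta\}/n$. Then $$P_n=\begin{cases}\dfrac{r+\phi^{p/a}-1}{\phi^{p/a}}+O(m\phi^{-m/a})&\text{if }0\le p\le\beta,\\[2mm]\dfrac{r+\phi^{\beta/a}-1}{\phi^{p/a}}+O(m\phi^{-m/a})&\text{if }\beta<p<1.\end{cases}$$ In particular $\limsup_n P_n=r\phi^{1/a-\beta/a}=\beta+O(1/a)$ and $\liminf_n P_n=r=\beta+O(1/a)$.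
   Context: $\phi$ is the golden ratio; $\mathfrak F(x)=\frac{\phi}{\sqrt5}(\phi^x+\phi^{-x}\cos(\pi x)\phi^{-2})$, increasing on $[1,\infty)$ with $\mathfrak F(n)=F_n$ where $F_1=1,F_2=2,F_{n+2}=F_{n+1}+F_n$; $\mathfrak F^{-1}$ is its inverse on $[1,\infty)$; $\{y\}$ denotes the fractional part. *)

From Stdlib Require Import Reals Lra List.
From Coquelicot Require Import Coquelicot.
Open Scope R_scope.

Definition phi : R := (1 + sqrt 5) / 2.

Definition Ffib (x : R) : R :=
  phi / sqrt 5 * (Rpower phi x + Rpower phi (- x) * cos (PI * x) * Rpower phi (-2)).

(** fractional part {y} = y - floor y  (Stdlib: Int_part = floor) *)
Definition fracp (y : R) : R := frac_part y.

Definition rr (a : nat) (beta : R) : R :=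
  (Rpower phi (beta / INR a) - 1) / (Rpower phi (1 / INR a) - 1).

Definition count_le (Finv : R -> R) (a : nat) (beta : R) (n : nat) : nat :=
  length (filter (fun k => if Rle_dec (fracp (Finv (INR k ^ a))) beta then true else false)
                 (seq 1 n)).

Definition Pn (Finv : R -> R) (a : nat) (beta : R) (n : nat) : R :=
  INR (count_le Finv a beta n) / INR n.

Definition mpart (Finv : R -> R) (a n : nat) : R := IZR (Int_part (Finv (INR n ^ a))).
Definition ppart (Finv : R -> R) (a n : nat) : R := fracp (Finv (INR n ^ a)).

Definition main_term (Finv : R -> R) (a : nat) (beta : R) (n : nat) : R :=
  let p := ppart Finv a n in
  if Rle_dec p beta
  then (rr a beta + Rpower phi (p / INR a) - 1) / Rpower phi (p / INR a)
  else (rr a beta + Rpower phi (beta / INR a) - 1) / Rpower phi (p / INR a).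

(* Write t_k = Finv(k^a), s = ln phi / a, c = (phi / sqrt 5)^(1/a) and H x = Ffib(x)^(1/a).
   Because Ffib x = (phi / sqrt 5) phi^x (1 + O(phi^(-2x))) is increasing on [1, oo), we have
   H x = c e^(s x) + O(c), and t_k <= t iff k <= H t.  If t_n = m + p, the k <= n with
   {t_k} <= beta are therefore the integers in the blocks [H j, H (j + beta)], j < m, and
   [H m, H (m + min p beta)]; counting them up to O(1) per block and summing the geometric series
   of the c e^(s j) gives n times the main term up to O(m), so P_n is the main term up to
   O(m e^(-s m)).  As a function of p the main term ranges over [r, r e^(s (1 - beta))], with
   values close to the ends for p close to beta and to 0.  Since t_(n+1) - t_n -> 0, the
   fractional parts {t_n} visit every subinterval of [0, 1) infinitely often, which yields the
   limsup and liminf; finally r = beta + O(s) as e^y = 1 + O(y). *)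

From Stdlib Require Import Reals Lra List Lia ZArith.
From Coquelicot Require Import Coquelicot.
Open Scope R_scope.

Lemma exp_le_exp x y : x <= y -> exp x <= exp y.
Proof. intros [Hlt | ->]; [left; apply exp_increasing | right]; easy. Qed.

Lemma exp_ge_1 x : 0 <= x -> 1 <= exp x.
Proof. intros Hx. rewrite <- exp_0. now apply exp_le_exp. Qed.

Lemma exp_le_inv_1_sub y : y < 1 -> exp y <= / (1 - y).
Proof.
  intros Hy. rewrite <- (Ropp_involutive y) at 1. rewrite exp_Ropp.
  apply Rinv_le_contravar; [lra |]. pose proof (exp_ineq1_le (- y)). lra.
Qed.

Lemma sqrt5_bounds : 2.2 < sqrt 5 < 2.3.
Proof.
  split.
  - rewrite <- (sqrt_square 2.2) by lra. apply sqrt_lt_1; lra.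
  - rewrite <- (sqrt_square 2.3) by lra. apply sqrt_lt_1; lra.
Qed.

Lemma phi_bounds : 1.6 < phi < 1.65.
Proof. unfold phi. pose proof sqrt5_bounds. lra. Qed.

Lemma ln_phi_bounds : 3/10 < ln phi < 1.
Proof.
  pose proof phi_bounds. split.
  - rewrite <- (ln_exp (3/10)). apply ln_increasing; [apply exp_pos |].
    eapply Rle_lt_trans; [apply exp_le_inv_1_sub; lra |].
    replace (1 - 3/10) with (/ (10/7)) by field. rewrite Rinv_inv. lra.
  - rewrite <- (ln_exp 1). apply ln_increasing; [lra |].
    pose proof (exp_ineq1_le 1). lra.
Qed.

(** * The interpolating Fibonacci function *)

Definition Ffib_err (x : R) : R := exp (- (2 * x + 2) * ln phi).

Lemma Ffib_factor x :
  Ffib x = phi / sqrt 5 * exp (x * ln phi) * (1 + Ffib_err x * cos (PI * x)).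
Proof.
  unfold Ffib, Ffib_err, Rpower.
  replace (- (2 * x + 2) * ln phi) with (- x * ln phi + -2 * ln phi + - (x * ln phi)) by ring.
  rewrite !exp_plus, exp_Ropp. pose proof sqrt5_bounds. pose proof (exp_pos (x * ln phi)).
  field. lra.
Qed.

Lemma Ffib_err_le_half x : 1 <= x -> Ffib_err x <= 1/2.
Proof.
  intros Hx. unfold Ffib_err. pose proof ln_phi_bounds.
  eapply Rle_trans; [apply (exp_le_exp _ (- (1))); nra |].
  rewrite exp_Ropp. apply (Rmult_le_reg_l (exp 1)); [apply exp_pos |].
  rewrite Rinv_r by apply Rgt_not_eq, exp_pos. pose proof (exp_ineq1_le 1). lra.
Qed.

Lemma Ffib_pos x : 1 <= x -> 0 < Ffib x.
Proof.
  intros Hx. rewrite Ffib_factor. pose proof (Ffib_err_le_half x Hx).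
  assert (0 < Ffib_err x) by apply exp_pos. pose proof (COS_bound (PI * x)).
  pose proof phi_bounds. pose proof sqrt5_bounds. pose proof (exp_pos (x * ln phi)).
  apply Rmult_lt_0_compat; [apply Rmult_lt_0_compat; [apply Rdiv_lt_0_compat |] |]; nra.
Qed.

Definition Ffib' (t : R) : R :=
  phi / sqrt 5 * (ln phi * exp (t * ln phi)
    - exp (- t * ln phi) * exp (-2 * ln phi) * (ln phi * cos (PI * t) + PI * sin (PI * t))).

Lemma is_derive_Ffib t : is_derive Ffib t (Ffib' t).
Proof. unfold Ffib, Rpower. auto_derive; [easy |]. unfold Ffib'. ring. Qed.

(* On [1, 2] the sine term is nonpositive; beyond 2, [phi^6 > 16] suffices. *)
Lemma Ffib'_oscillation_bound t : 1 < t ->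
  ln phi * cos (PI * t) + PI * sin (PI * t) < ln phi * exp ((2 * t + 2) * ln phi).
Proof.
  intros Ht. pose proof ln_phi_bounds. pose proof PI_RGT_0. pose proof PI_4.
  pose proof (COS_bound (PI * t)). pose proof (SIN_bound (PI * t)).
  destruct (Rle_dec t 2) as [Ht2 | Ht2].
  - assert (Hsin : sin (PI * t) <= 0).
    { replace (PI * t) with (PI * t - PI + PI) by ring. rewrite neg_sin.
      assert (0 <= sin (PI * t - PI)) by (apply sin_ge_0; nra). lra. }
    assert (1 < exp ((2 * t + 2) * ln phi)) by (rewrite <- exp_0; apply exp_increasing; nra).
    assert (ln phi * cos (PI * t) <= ln phi) by nra.
    assert (PI * sin (PI * t) <= 0) by nra.
    nra.
  - assert (Hphi6 : 16 < exp (6 * ln phi)).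
    { replace (6 * ln phi) with (ln phi + ln phi + ln phi + ln phi + ln phi + ln phi) by ring.
      pose proof phi_bounds. rewrite !exp_plus, exp_ln by lra.
      assert (2.56 < phi * phi) by nra. assert (6.5 < phi * phi * (phi * phi)) by nra. nra. }
    assert (exp (6 * ln phi) <= exp ((2 * t + 2) * ln phi)) by (apply exp_le_exp; nra).
    nra.
Qed.

Lemma Ffib'_pos t : 1 < t -> 0 < Ffib' t.
Proof.
  intros Ht. unfold Ffib'.
  pose proof phi_bounds. pose proof sqrt5_bounds. pose proof (Ffib'_oscillation_bound t Ht).
  set (w := ln phi * cos (PI * t) + PI * sin (PI * t)) in *.
  assert (E : exp (- t * ln phi) * exp (-2 * ln phi) * exp ((2 * t + 2) * ln phi)
              = exp (t * ln phi)).
  { rewrite <- !exp_plus. f_equal. ring. }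
  pose proof (exp_pos (- t * ln phi)). pose proof (exp_pos (-2 * ln phi)).
  assert (exp (- t * ln phi) * exp (-2 * ln phi) * w
          < exp (- t * ln phi) * exp (-2 * ln phi) * (ln phi * exp ((2 * t + 2) * ln phi))).
  { apply Rmult_lt_compat_l; [apply Rmult_lt_0_compat |]; easy. }
  apply Rmult_lt_0_compat; [apply Rdiv_lt_0_compat; lra |]. nra.
Qed.

Lemma Ffib_increasing x y : 1 <= x -> x < y -> Ffib x < Ffib y.
Proof.
  intros Hx Hxy.
  destruct (MVT_cor2 Ffib Ffib' x y Hxy) as [c [Hc Hcxy]].
  { intros c _. apply is_derive_Reals, is_derive_Ffib. }
  pose proof (Ffib'_pos c ltac:(lra)). nra.
Qed.

(** * The a-th root of Ffib *)

Lemma exp_ln_div_dist_1 y b : 0 < y -> 1 <= b -> Rabs (exp (ln y / b) - 1) <= Rabs (y - 1).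
Proof.
  intros Hy Hb.
  assert (Hdiv : forall u, 0 <= u -> 0 <= u / b <= u).
  { intros u Hu. split; [apply Rdiv_le_0_compat; lra |].
    apply (Rmult_le_reg_r b); [lra |]. unfold Rdiv. rewrite Rmult_assoc, Rinv_l by lra. nra. }
  destruct (Rle_dec 1 y) as [Hy1 | Hy1].
  - assert (0 <= ln y) by (rewrite <- ln_1; apply ln_le; lra).
    destruct (Hdiv (ln y)) as [H0 H1]; [easy |].
    apply exp_le_exp in H0, H1. rewrite exp_0 in H0. rewrite exp_ln in H1 by easy.
    rewrite !Rabs_right; lra.
  - assert (ln y <= 0) by (rewrite <- ln_1; apply ln_le; lra).
    destruct (Hdiv (- ln y)) as [H0 H1]; [lra |].
    assert (Hneg : - ln y / b = - (ln y / b)) by (field; lra).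
    assert (H2 : ln y <= ln y / b) by lra. assert (H3 : ln y / b <= 0) by lra.
    apply exp_le_exp in H2, H3. rewrite exp_0 in H3. rewrite exp_ln in H2 by easy.
    rewrite !Rabs_left1; lra.
Qed.

Definition Froot (a : nat) (x : R) : R := exp (ln (Ffib x) / INR a).
Definition Froot_rate (a : nat) : R := ln phi / INR a.
Definition Froot_coef (a : nat) : R := exp (ln (phi / sqrt 5) / INR a).

Section Froot.

Variable a : nat.
Hypothesis Ha : (0 < a)%nat.

Let s := Froot_rate a.
Let c := Froot_coef a.

Lemma INR_ge_1 : 1 <= INR a.
Proof. apply (le_INR 1). lia. Qed.

Lemma Froot_rate_bounds : 0 < s <= ln phi.
Proof.
  pose proof INR_ge_1. pose proof ln_phi_bounds. unfold s, Froot_rate. split.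
  - apply Rdiv_lt_0_compat; lra.
  - apply (Rmult_le_reg_r (INR a)); [lra |].
    unfold Rdiv. rewrite Rmult_assoc, Rinv_l by lra. nra.
Qed.

Lemma exp_Froot_rate_bounds : 1 < exp s <= phi.
Proof.
  destruct Froot_rate_bounds. split.
  - rewrite <- exp_0. now apply exp_increasing.
  - rewrite <- (exp_ln phi) by (pose proof phi_bounds; lra). now apply exp_le_exp.
Qed.

Lemma Rpower_phi_div x : Rpower phi (x / INR a) = exp (s * x).
Proof. unfold Rpower, s, Froot_rate. pose proof INR_ge_1. f_equal. field. lra. Qed.

Lemma Rpower_phi_1_sub_div beta :
  Rpower phi (1 / INR a - beta / INR a) = exp (s * (1 - beta)).
Proof.
  rewrite <- Rpower_phi_div. f_equal. pose proof INR_ge_1. field. lra.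
Qed.

Lemma Froot_coef_pos : 0 < c.
Proof. apply exp_pos. Qed.

Lemma Froot_rel_error x : 1 <= x ->
  Rabs (Froot a x - c * exp (s * x)) <= c * exp (s * x) * Ffib_err x.
Proof.
  intros Hx. pose proof INR_ge_1. pose proof phi_bounds. pose proof sqrt5_bounds.
  pose proof (Ffib_err_le_half x Hx). pose proof (exp_pos (- (2 * x + 2) * ln phi)).
  pose proof (COS_bound (PI * x)). fold (Ffib_err x) in *.
  set (e := Ffib_err x * cos (PI * x)).
  assert (He : Rabs e <= Ffib_err x).
  { unfold e. rewrite Rabs_mult, (Rabs_right (Ffib_err x)) by lra.
    assert (Rabs (cos (PI * x)) <= 1) by (apply Rabs_le; lra). nra. }
  apply Rabs_le_between in He.
  assert (Hroot : Froot a x = c * exp (s * x) * exp (ln (1 + e) / INR a)).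
  { unfold Froot, c, s, Froot_coef, Froot_rate. rewrite Ffib_factor. fold e.
    assert (HK : 0 < phi / sqrt 5) by (apply Rdiv_lt_0_compat; lra).
    pose proof (exp_pos (x * ln phi)).
    rewrite ln_mult, ln_mult, ln_exp by first [lra | apply Rmult_lt_0_compat; lra].
    rewrite <- !exp_plus. f_equal. field. lra. }
  rewrite Hroot.
  replace (c * exp (s * x) * exp (ln (1 + e) / INR a) - c * exp (s * x))
    with (c * exp (s * x) * (exp (ln (1 + e) / INR a) - 1)) by ring.
  pose proof Froot_coef_pos. pose proof (exp_pos (s * x)).
  rewrite Rabs_mult, Rabs_right by (left; apply Rmult_lt_0_compat; easy).
  apply Rmult_le_compat_l; [left; apply Rmult_lt_0_compat; easy |].
  eapply Rle_trans; [apply exp_ln_div_dist_1; lra |].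
  replace (1 + e - 1) with e by ring. apply Rabs_le. lra.
Qed.

Lemma Froot_approx x : 1 <= x -> Rabs (Froot a x - c * exp (s * x)) <= c.
Proof.
  intros Hx. eapply Rle_trans; [now apply Froot_rel_error |].
  destruct Froot_rate_bounds. pose proof Froot_coef_pos.
  assert (exp (s * x) * Ffib_err x <= 1).
  { unfold Ffib_err. rewrite <- exp_plus, <- exp_0. apply exp_le_exp. nra. }
  rewrite Rmult_assoc. nra.
Qed.

Lemma Froot_lower x : 1 <= x -> c * exp (s * x) / 2 <= Froot a x.
Proof.
  intros Hx. pose proof (Froot_rel_error x Hx) as Herr. apply Rabs_le_between in Herr.
  pose proof (Ffib_err_le_half x Hx). pose proof Froot_coef_pos. pose proof (exp_pos (s * x)).
  assert (0 < c * exp (s * x)) by now apply Rmult_lt_0_compat. nra.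
Qed.

Lemma Froot_increasing x y : 1 <= x -> x < y -> Froot a x < Froot a y.
Proof.
  intros Hx Hxy. unfold Froot. apply exp_increasing. pose proof INR_ge_1.
  apply Rmult_lt_compat_r; [apply Rinv_0_lt_compat; lra |].
  apply ln_increasing; [now apply Ffib_pos |]. now apply Ffib_increasing.
Qed.

Lemma Froot_le_iff x y : 1 <= x -> 1 <= y -> Froot a x <= Froot a y <-> x <= y.
Proof.
  intros Hx Hy. split.
  - intros Hle. destruct (Rle_dec x y) as [| Hyx]; [easy |].
    pose proof (Froot_increasing y x Hy ltac:(lra)). lra.
  - intros [Hlt | ->]; [left; now apply Froot_increasing | lra].
Qed.

Lemma Froot_min x y : 1 <= x -> 1 <= y -> Froot a (Rmin x y) = Rmin (Froot a x) (Froot a y).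
Proof.
  intros Hx Hy. unfold Rmin.
  destruct (Rle_dec x y) as [Hxy | Hxy], (Rle_dec (Froot a x) (Froot a y)) as [HF | HF]; try easy.
  - exfalso. apply HF. now apply Froot_le_iff.
  - exfalso. apply Hxy. now apply (Froot_le_iff x y).
Qed.

Lemma Froot_gap_eventually d : 0 < d ->
  exists X, forall x, X <= x -> Froot a x + 1 < Froot a (x + d).
Proof.
  intros Hd. destruct Froot_rate_bounds as [Hs _]. pose proof Froot_coef_pos as Hc.
  set (k := c * (s * s * d)).
  assert (Hk : 0 < k) by (apply Rmult_lt_0_compat; [| apply Rmult_lt_0_compat]; nra).
  set (Q := (1 + 2 * c) / k).
  assert (HQ : 0 < Q) by (apply Rdiv_lt_0_compat; lra).
  assert (EQ : Q * k = 1 + 2 * c) by (unfold Q; field; lra).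
  exists (1 + Q). intros x Hx.
  assert (Hx1 : 1 <= x) by lra.
  assert (Hkx : 1 + 2 * c < k * x).
  { assert (k * (1 + Q) <= k * x) by (apply Rmult_le_compat_l; lra). nra. }
  pose proof (Froot_approx x Hx1) as Ex. pose proof (Froot_approx (x + d) ltac:(lra)) as Exd.
  apply Rabs_le_between in Ex, Exd.
  assert (Hgrow : 1 + 2 * c < c * exp (s * x) * (exp (s * d) - 1)).
  { assert (s * x <= exp (s * x)) by (pose proof (exp_ineq1_le (s * x)); lra).
    assert (s * d <= exp (s * d) - 1) by (pose proof (exp_ineq1_le (s * d)); lra).
    assert (c * (s * x) * (s * d) <= c * exp (s * x) * (exp (s * d) - 1)).
    { apply Rmult_le_compat; [| nra | apply Rmult_le_compat_l; lra | lra].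
      apply Rmult_le_pos; nra. }
    unfold k in Hkx. nra. }
  replace (s * (x + d)) with (s * x + s * d) in Exd by ring. rewrite exp_plus in Exd.
  nra.
Qed.

End Froot.

(** * Finite sums, counting, and sequences *)

Fixpoint sumR (f : nat -> R) (l : list nat) : R :=
  match l with nil => 0 | k :: l' => f k + sumR f l' end.

Lemma sumR_app f l1 l2 : sumR f (l1 ++ l2) = sumR f l1 + sumR f l2.
Proof. induction l1 as [| k l1 IH]; simpl; [| rewrite IH]; ring. Qed.

Lemma sumR_ext f g l : (forall k, In k l -> f k = g k) -> sumR f l = sumR g l.
Proof.
  induction l as [| k l IH]; simpl; intros Hfg; [easy |].
  rewrite Hfg, IH by auto. easy.
Qed.

Lemma sumR_plus f g l : sumR (fun k => f k + g k) l = sumR f l + sumR g l.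
Proof. induction l as [| k l IH]; simpl; [| rewrite IH]; ring. Qed.

Lemma sumR_scal c f l : sumR (fun k => c * f k) l = c * sumR f l.
Proof. induction l as [| k l IH]; simpl; [| rewrite IH]; ring. Qed.

Lemma sumR_swap (g : nat -> nat -> R) l1 l2 :
  sumR (fun i => sumR (g i) l2) l1 = sumR (fun j => sumR (fun i => g i j) l1) l2.
Proof.
  induction l1 as [| i l1 IH]; simpl.
  - induction l2; simpl; [easy | lra].
  - rewrite IH, <- sumR_plus. easy.
Qed.

Lemma sumR_dist f g l e : (forall k, In k l -> Rabs (f k - g k) <= e) ->
  Rabs (sumR f l - sumR g l) <= INR (length l) * e.
Proof.
  induction l as [| k l IH]; intros Hfg; simpl sumR; simpl length.
  - rewrite Rminus_0_r, Rabs_R0. simpl. lra.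
  - replace (f k + sumR f l - (g k + sumR g l)) with ((f k - g k) + (sumR f l - sumR g l)) by ring.
    eapply Rle_trans; [apply Rabs_triang |].
    pose proof (Hfg k (or_introl eq_refl)). pose proof (IH (fun i Hi => Hfg i (or_intror Hi))).
    rewrite S_INR. lra.
Qed.

Lemma sumR_single f s len i : (s <= i < s + len)%nat -> (forall j, j <> i -> f j = 0) ->
  sumR f (seq s len) = f i.
Proof.
  revert s. induction len as [| len IH]; intros s Hi Hf; [lia |]. simpl.
  destruct (Nat.eq_dec s i) as [-> | Hsi].
  - rewrite (sumR_ext _ (fun _ => 0)) by (intros j Hj; apply in_seq in Hj; apply Hf; lia).
    clear. induction (seq (S i) len); simpl; lra.
  - rewrite Hf, (IH (S s)) by (easy || lia). ring.
Qed.

Lemma length_filter_sumR (f : nat -> bool) l :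
  INR (length (filter f l)) = sumR (fun k => if f k then 1 else 0) l.
Proof.
  induction l as [| k l IH]; simpl; [easy |].
  destruct (f k); simpl length; rewrite <- IH; [rewrite S_INR |]; ring.
Qed.

Definition ind_Icc (A B x : R) : R :=
  if Rle_dec A x then if Rle_dec x B then 1 else 0 else 0.

Lemma ind_Icc_iff A B x A' B' x' : (A <= x <-> A' <= x') -> (x <= B <-> x' <= B') ->
  ind_Icc A B x = ind_Icc A' B' x'.
Proof.
  intros HA HB. unfold ind_Icc.
  destruct (Rle_dec A x), (Rle_dec A' x'), (Rle_dec x B), (Rle_dec x' B'); tauto.
Qed.

(* The sharper lower bound [n - A] while [n <= B] is what makes the induction go through. *)
Lemma count_Icc_invariant A B n : 0 < A <= B ->
  let c := sumR (fun k => ind_Icc A B (INR k)) (seq 1 n) in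
  (INR n < A -> c = 0) /\
  (A <= INR n <= B -> INR n - A < c <= INR n - A + 1) /\
  (B < INR n -> B - A - 1 < c <= B - A + 1).
Proof.
  intros HAB. induction n as [| n IH]; cbv zeta in *.
  - simpl. repeat split; intros; lra.
  - rewrite seq_S, sumR_app. cbn [sumR]. replace (1 + n)%nat with (S n) by lia.
    destruct IH as [I1 [I2 I3]].
    set (c := sumR (fun k => ind_Icc A B (INR k)) (seq 1 n)) in *.
    rewrite S_INR in *. pose proof (pos_INR n).
    unfold ind_Icc. destruct (Rle_dec A (INR n + 1)), (Rle_dec (INR n + 1) B);
    (destruct (Rlt_le_dec (INR n) A) as [h | h];
     [rewrite I1 by easy | destruct (Rle_dec (INR n) B) as [h' | h'];
        [specialize (I2 ltac:(lra)) | specialize (I3 ltac:(lra))]]);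
    repeat split; intros; lra.
Qed.

Lemma count_Icc A B n : 0 < A <= B -> A <= INR n ->
  Rabs (sumR (fun k => ind_Icc A B (INR k)) (seq 1 n) - (Rmin (INR n) B - A)) <= 1.
Proof.
  intros HAB HAn. destruct (count_Icc_invariant A B n HAB) as [_ [I2 I3]].
  apply Rabs_le. unfold Rmin. destruct (Rle_dec (INR n) B).
  - specialize (I2 ltac:(lra)). lra.
  - specialize (I3 ltac:(lra)). lra.
Qed.

Lemma nat_floor_exists y : 1 <= y -> exists i : nat, (1 <= i)%nat /\ INR i <= y < INR i + 1.
Proof.
  intros Hy. destruct (base_Int_part y) as [H1 H2].
  assert (Hz : (1 <= Int_part y)%Z).
  { assert (Hq : 0 < IZR (Int_part y)) by lra. apply lt_IZR in Hq. lia. }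
  exists (Z.to_nat (Int_part y)). rewrite INR_IZR_INZ, Z2Nat.id by lia. split; [lia | lra].
Qed.

Lemma nat_floor_unique (i j : nat) y :
  INR i <= y < INR i + 1 -> INR j <= y < INR j + 1 -> i = j.
Proof.
  intros Hi Hj.
  assert (Hij : INR i < INR (j + 1)) by (rewrite plus_INR; simpl; lra).
  assert (Hji : INR j < INR (i + 1)) by (rewrite plus_INR; simpl; lra).
  apply INR_lt in Hij, Hji. lia.
Qed.

Lemma Int_part_fracp_nat (i : nat) y : INR i <= y < INR i + 1 ->
  IZR (Int_part y) = INR i /\ fracp y = y - INR i.
Proof.
  intros Hi. assert (Hint : Int_part y = Z.of_nat i).
  { symmetry. apply Int_part_spec. rewrite <- INR_IZR_INZ. lra. }
  unfold fracp, frac_part. rewrite Hint, <- INR_IZR_INZ. easy.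
Qed.

Lemma fracp_bounds y : 0 <= fracp y < 1.
Proof. unfold fracp, frac_part. destruct (base_Int_part y). lra. Qed.

(* For [beta < 1] the intervals [j, j + beta] are disjoint, so at most one of them contains [y]. *)
Lemma fracp_indicator_blocks y beta m : 0 <= beta < 1 -> 1 <= y < INR m + 1 ->
  (if Rle_dec (fracp y) beta then 1 else 0)
  = sumR (fun j => ind_Icc (INR j) (INR j + beta) y) (seq 1 m).
Proof.
  intros Hb Hy. destruct (nat_floor_exists y) as [i [Hi1 Hi]]; [lra |].
  assert (Him : (i <= m)%nat).
  { assert (Him : INR i < INR (m + 1)) by (rewrite plus_INR; simpl; lra).
    apply INR_lt in Him. lia. }
  rewrite (sumR_single _ 1 m i).
  - destruct (Int_part_fracp_nat i y Hi) as [_ ->].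
    unfold ind_Icc. destruct (Rle_dec (INR i) y); [| lra].
    destruct (Rle_dec (y - INR i) beta), (Rle_dec y (INR i + beta)); lra.
  - lia.
  - intros j Hj. unfold ind_Icc.
    destruct (Rle_dec (INR j) y), (Rle_dec y (INR j + beta)); try easy.
    exfalso. apply Hj, (nat_floor_unique j i y); [lra | easy].
Qed.

Lemma is_LimSup_seq_approx (u v : nat -> R) (l : R) :
  (forall e, 0 < e -> exists N, forall n, (N <= n)%nat -> Rabs (u n - v n) < e) ->
  (forall n, v n <= l) ->
  (forall e, 0 < e -> forall N, exists n, (N <= n)%nat /\ l - e < v n) ->
  is_LimSup_seq u l.
Proof.
  intros Hc Hv Hf eps. pose proof (cond_pos eps) as He.
  destruct (Hc (eps / 2) ltac:(lra)) as [N1 HN1]. split.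
  - intros N. destruct (Hf (eps / 2) ltac:(lra) (Nat.max N N1)) as [n [Hn Hvn]].
    exists n. split; [lia |]. specialize (HN1 n ltac:(lia)). apply Rabs_lt_between in HN1. lra.
  - exists N1. intros n Hn. specialize (HN1 n Hn). apply Rabs_lt_between in HN1.
    specialize (Hv n). lra.
Qed.

Lemma is_LimInf_seq_approx (u v : nat -> R) (l : R) :
  (forall e, 0 < e -> exists N, forall n, (N <= n)%nat -> Rabs (u n - v n) < e) ->
  (forall n, l <= v n) ->
  (forall e, 0 < e -> forall N, exists n, (N <= n)%nat /\ v n < l + e) ->
  is_LimInf_seq u l.
Proof.
  intros Hc Hv Hf. apply is_LimSup_opp_LimInf_seq.
  apply (is_LimSup_seq_approx _ (fun n => - v n)).
  - intros e He. destruct (Hc e He) as [N HN]. exists N. intros n Hn.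
    rewrite <- Rabs_Ropp. replace (- (- u n - - v n)) with (u n - v n) by ring. now apply HN.
  - intros n. specialize (Hv n). lra.
  - intros e He N. destruct (Hf e He N) as [n [Hn Hvn]]. exists n. split; [easy | lra].
Qed.

Lemma mul_exp_neg_bound s m : 0 < s -> 0 < m -> m * exp (- (s * m)) <= 4 / (s * s * m).
Proof.
  intros Hs Hm. assert (Hsm : 0 < s * m) by nra.
  assert (Hsq : s * m / 2 * (s * m / 2) <= exp (s * m)).
  { replace (exp (s * m)) with (exp (s * m / 2) * exp (s * m / 2))
      by (rewrite <- exp_plus; f_equal; field).
    pose proof (exp_ineq1_le (s * m / 2)). apply Rmult_le_compat; lra. }
  rewrite exp_Ropp. pose proof (exp_pos (s * m)).
  apply (Rmult_le_reg_r (exp (s * m) * (s * s * m))); [apply Rmult_lt_0_compat; nra |].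
  replace (m * / exp (s * m) * (exp (s * m) * (s * s * m))) with (s * s * m * m) by (field; lra).
  replace (4 / (s * s * m) * (exp (s * m) * (s * s * m))) with (4 * exp (s * m)) by (field; nra).
  nra.
Qed.

Lemma first_crossing (f : nat -> R) tau n0 n1 : (n0 <= n1)%nat -> f n0 < tau <= f n1 ->
  exists n, (n0 < n <= n1)%nat /\ f (pred n) < tau <= f n.
Proof.
  intros Hn01 Hf. induction n1 as [| n1 IH].
  - replace n0 with 0%nat in Hf by lia. lra.
  - destruct (Nat.eq_dec n0 (S n1)) as [-> | Hne]; [lra |].
    destruct (Rlt_le_dec (f n1) tau) as [Hlt | Hge].
    + exists (S n1). simpl. split; [lia | lra].
    + destruct IH as [n Hn]; [lia | lra |]. exists n. split; [lia | easy].
Qed.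


(** * The main term *)

(* With [s = ln phi / a] these are the paper's [r] and the main term of [P_n] as a function of
   [p = {Finv (n^a)}]. *)
Definition rr_rate (s beta : R) : R := (exp (s * beta) - 1) / (exp s - 1).
Definition main_rate (s beta p : R) : R :=
  (rr_rate s beta + exp (s * Rmin p beta) - 1) / exp (s * p).

Lemma geometric_sumR s m :
  (exp s - 1) * sumR (fun j => exp (s * INR j)) (seq 1 m) = exp (s * INR (S m)) - exp s.
Proof.
  induction m as [| m IH].
  - simpl. rewrite Rmult_1_r. ring.
  - rewrite seq_S, sumR_app, Rmult_plus_distr_l, IH. cbn [sumR].
    replace (1 + m)%nat with (S m) by lia.
    replace (s * INR (S (S m))) with (s * INR (S m) + s) by (rewrite (S_INR (S m)); ring).
    rewrite exp_plus. ring.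
Qed.

Section MainTerm.

Variables s beta : R.
Hypothesis Hs : 0 < s.
Hypothesis Hbeta : 0 <= beta <= 1.

Let r := rr_rate s beta.

Lemma exp_rate_gt_1 : 1 < exp s.
Proof. rewrite <- exp_0. now apply exp_increasing. Qed.

Lemma rr_rate_exp : r + exp (s * beta) - 1 = r * exp s.
Proof. unfold r, rr_rate. pose proof exp_rate_gt_1. field. lra. Qed.

Lemma rr_rate_exp_split : r * exp (s * (1 - beta)) * exp (s * beta) = r * exp s.
Proof. rewrite Rmult_assoc, <- exp_plus. do 2 f_equal. ring. Qed.

Lemma rr_rate_bounds : 0 <= r /\ r * exp (s * (1 - beta)) <= 1.
Proof.
  pose proof exp_rate_gt_1. pose proof rr_rate_exp. pose proof rr_rate_exp_split.
  assert (1 <= exp (s * beta)) by (apply exp_ge_1; nra).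
  assert (1 <= exp (s * (1 - beta))) by (apply exp_ge_1; nra).
  assert (exp (s * beta) <= exp s) by (apply exp_le_exp; nra).
  assert (0 <= r) by (unfold r, rr_rate; apply Rdiv_le_0_compat; lra).
  assert (r <= 1).
  { unfold r, rr_rate. apply (Rmult_le_reg_r (exp s - 1)); [lra |].
    unfold Rdiv. rewrite Rmult_assoc, Rinv_l; lra. }
  assert ((r * exp (s * (1 - beta)) - 1) * exp (s * beta) <= 0) by nra.
  split; [easy | nra].
Qed.

Lemma main_rate_range p : 0 <= p <= 1 ->
  r <= main_rate s beta p <= r * exp (s * (1 - beta)).
Proof.
  intros Hp. unfold main_rate. fold r.
  destruct rr_rate_bounds as [Hr0 HX1].
  pose proof rr_rate_exp as Hr. pose proof rr_rate_exp_split as HX.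
  set (X := r * exp (s * (1 - beta))) in *.
  pose proof (exp_pos (s * p)). pose proof (exp_pos (s * beta)).
  assert (1 <= exp (s * p)) by (apply exp_ge_1; nra).
  assert (Hr1 : r <= X).
  { assert (1 <= exp (s * (1 - beta))) by (apply exp_ge_1; nra). unfold X. nra. }
  assert (Hdiv : forall u, u / exp (s * p) * exp (s * p) = u) by (intros; field; lra).
  unfold Rmin. destruct (Rle_dec p beta) as [Hpb | Hpb]; split;
    apply (Rmult_le_reg_r (exp (s * p))); try rewrite Hdiv; try lra.
  - nra.
  - assert (exp (s * p) <= exp (s * beta)) by (apply exp_le_exp; nra).
    assert ((r + exp (s * p) - 1) * exp (s * beta) <= X * exp (s * p) * exp (s * beta)) by nra.
    apply (Rmult_le_reg_r (exp (s * beta))); lra.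
  - assert (exp (s * p) <= exp s) by (apply exp_le_exp; nra). nra.
  - assert (exp (s * beta) <= exp (s * p)) by (apply exp_le_exp; nra). nra.
Qed.

Lemma main_rate_near_beta p d : beta <= p < beta + d ->
  r * exp (s * (1 - beta)) - s * d <= main_rate s beta p.
Proof.
  intros Hp. unfold main_rate. fold r. rewrite Rmin_right by lra.
  destruct rr_rate_bounds as [Hr0 HX1]. rewrite rr_rate_exp, <- rr_rate_exp_split.
  pose proof (exp_pos (s * (1 - beta))).
  set (X := r * exp (s * (1 - beta))) in *.
  assert (HX0 : 0 <= X) by (unfold X; nra).
  replace (X * exp (s * beta) / exp (s * p)) with (X * exp (- (s * (p - beta)))).
  - pose proof (exp_ineq1_le (- (s * (p - beta)))).
    assert (X * (1 - s * (p - beta)) <= X * exp (- (s * (p - beta))))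
      by (apply Rmult_le_compat_l; lra).
    assert (s * (p - beta) <= s * d) by (apply Rmult_le_compat_l; lra).
    assert (X * (s * (p - beta)) <= s * (p - beta)) by (assert (0 <= s * (p - beta)) by nra; nra).
    lra.
  - replace (- (s * (p - beta))) with (s * beta + - (s * p)) by ring.
    rewrite exp_plus, exp_Ropp. unfold Rdiv. ring.
Qed.

Lemma main_rate_near_0 p d : 0 <= p < d -> s * d <= 1/2 -> main_rate s beta p <= r + 2 * s * d.
Proof.
  intros Hp Hd. unfold main_rate. fold r. pose proof rr_rate_bounds.
  assert (0 <= s * d) by nra.
  assert (Hmin : 0 <= Rmin p beta <= p) by (unfold Rmin; destruct (Rle_dec p beta); lra).
  assert (1 <= exp (s * Rmin p beta)) by (apply exp_ge_1; nra).
  assert (exp (s * Rmin p beta) <= exp (s * d)) by (apply exp_le_exp; nra).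
  assert (exp (s * d) <= 1 + 2 * (s * d)).
  { eapply Rle_trans; [apply exp_le_inv_1_sub; lra |].
    apply (Rmult_le_reg_r (1 - s * d)); [lra |]. rewrite Rinv_l by lra. nra. }
  assert (1 <= exp (s * p)) by (apply exp_ge_1; nra).
  apply (Rle_trans _ (r + exp (s * Rmin p beta) - 1)); [| lra].
  apply (Rmult_le_reg_r (exp (s * p))); [lra |].
  unfold Rdiv. rewrite Rmult_assoc, Rinv_l by lra. nra.
Qed.

Lemma sum_exp_blocks m x : (1 <= m)%nat -> INR m <= x < INR m + 1 -> beta < 1 ->
  sumR (fun j => exp (s * Rmin x (INR j + beta)) - exp (s * INR j)) (seq 1 m)
  = exp (s * x) * main_rate s beta (x - INR m) - r * exp s.
Proof.
  intros Hm Hx Hb1. destruct m as [| m]; [lia |].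
  rewrite seq_S, sumR_app. cbn [sumR]. replace (1 + m)%nat with (S m) by lia.
  assert (Hfull : sumR (fun j => exp (s * Rmin x (INR j + beta)) - exp (s * INR j)) (seq 1 m)
                  = r * (exp (s * INR (S m)) - exp s)).
  { rewrite (sumR_ext _ (fun j => r * (exp s - 1) * exp (s * INR j))).
    - rewrite sumR_scal, Rmult_assoc, geometric_sumR. easy.
    - intros j Hj. apply in_seq in Hj.
      assert (INR j + 1 <= INR (S m)) by (rewrite <- S_INR; apply le_INR; lia).
      rewrite Rmin_right by lra.
      replace (s * (INR j + beta)) with (s * INR j + s * beta) by ring.
      rewrite exp_plus. pose proof rr_rate_exp. nra. }
  set (p := x - INR (S m)).
  assert (Hlast : Rmin x (INR (S m) + beta) = INR (S m) + Rmin p beta).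
  { unfold p, Rmin. destruct (Rle_dec x _), (Rle_dec (x - INR (S m)) beta); lra. }
  assert (Hx_split : exp (s * x) = exp (s * INR (S m)) * exp (s * p)).
  { rewrite <- exp_plus. f_equal. unfold p. ring. }
  rewrite Hfull, Hlast, Hx_split. unfold main_rate. fold r.
  replace (s * (INR (S m) + Rmin p beta)) with (s * INR (S m) + s * Rmin p beta) by ring.
  rewrite exp_plus. pose proof (exp_pos (s * p)). field. lra.
Qed.

Lemma rr_rate_near_beta : exp s <= 2 ->
  Rabs (r * exp (s * (1 - beta)) - beta) <= 2 * s /\ Rabs (r - beta) <= 2 * s.
Proof.
  intros He2. pose proof exp_rate_gt_1. destruct rr_rate_bounds as [Hr0 _].
  assert (Hr : r * (exp s - 1) = exp (s * beta) - 1) by (pose proof rr_rate_exp; lra).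
  pose proof rr_rate_exp_split as Hsplit.
  pose proof (exp_pos (s * beta)). pose proof (exp_pos s).
  assert (Hdown : forall y, exp y - 1 <= y * exp y).
  { intros y. pose proof (exp_ineq1_le (- y)) as Hneg. rewrite exp_Ropp in Hneg.
    pose proof (exp_pos y). apply (Rmult_le_compat_r (exp y)) in Hneg; [| lra].
    rewrite Rinv_l in Hneg by lra. nra. }
  assert (Hup : exp (s * beta) - 1 <= s * beta * exp (s * beta)) by apply Hdown.
  assert (Hlo : s * beta <= exp (s * beta) - 1) by (pose proof (exp_ineq1_le (s * beta)); lra).
  assert (Hs1 : s <= exp s - 1) by (pose proof (exp_ineq1_le s); lra).
  assert (Hes : exp s - 1 <= s * exp s) by apply Hdown.
  assert (1 <= exp (s * (1 - beta))) by (apply exp_ge_1; nra).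
  assert (Hr_le : r <= r * exp (s * (1 - beta))) by nra.
  assert (Hupper : r * exp (s * (1 - beta)) <= beta + 2 * s).
  { assert (Hr_beta : r <= beta * exp (s * beta)).
    { apply (Rmult_le_reg_r (exp s - 1)); [lra |].
      assert (0 <= (exp s - 1 - s) * (beta * exp (s * beta))) by (apply Rmult_le_pos; nra). nra. }
    assert (r * exp (s * (1 - beta)) * exp (s * beta) <= beta * exp s * exp (s * beta)) by nra.
    assert (r * exp (s * (1 - beta)) <= beta * exp s)
      by (apply (Rmult_le_reg_r (exp (s * beta))); lra).
    nra. }
  assert (Hlower : beta - s <= r).
  { assert (beta <= r * exp s).
    { apply (Rmult_le_reg_r s); [lra |]. nra. }
    pose proof (exp_ineq1_le (- s)) as Hneg. rewrite exp_Ropp in Hneg.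
    assert (beta * / exp s <= r).
    { apply (Rmult_le_reg_r (exp s)); [lra |]. rewrite Rmult_assoc, Rinv_l; lra. }
    nra. }
  split; apply Rabs_le; lra.
Qed.

End MainTerm.

Lemma rr_rr_rate a beta : (0 < a)%nat -> rr a beta = rr_rate (Froot_rate a) beta.
Proof.
  intros Ha. unfold rr, rr_rate. rewrite !Rpower_phi_div by easy. rewrite Rmult_1_r. easy.
Qed.

Lemma main_term_main_rate Finv a beta n : (0 < a)%nat ->
  main_term Finv a beta n = main_rate (Froot_rate a) beta (ppart Finv a n).
Proof.
  intros Ha. unfold main_term, main_rate. rewrite rr_rr_rate, !Rpower_phi_div by easy.
  unfold Rmin. now destruct (Rle_dec _ _).
Qed.

Lemma main_rate_beta_1 s p : 0 < s -> 0 <= p < 1 -> main_rate s 1 p = 1.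
Proof.
  intros Hs Hp. unfold main_rate, rr_rate. rewrite Rmult_1_r, Rmin_left by lra.
  pose proof (exp_rate_gt_1 s Hs). pose proof (exp_pos (s * p)). field. lra.
Qed.

Lemma ppart_bounds Finv a n : 0 <= ppart Finv a n < 1.
Proof. apply fracp_bounds. Qed.

Lemma Pn_beta_1 Finv a n : (1 <= n)%nat -> Pn Finv a 1 n = 1.
Proof.
  intros Hn. unfold Pn, count_le.
  assert (Hall : forall k, (if Rle_dec (fracp (Finv (INR k ^ a))) 1 then true else false) = true).
  { intros k. destruct (Rle_dec _ _) as [| Hk]; [easy |].
    pose proof (ppart_bounds Finv a k). unfold ppart in *. lra. }
  rewrite (filter_ext _ _ Hall), List.filter_true, length_seq. field. apply not_0_INR. lia.
Qed.

(** * Counting along [Finv (k^a)] *)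

Section Counting.

Variables (a : nat) (Finv : R -> R).
Hypothesis Ha : (0 < a)%nat.
Hypothesis HFinv : forall y, 1 <= y -> 1 <= Finv y /\ Ffib (Finv y) = y.

Let s := Froot_rate a.
Let c := Froot_coef a.

Definition Finv_pow (k : nat) : R := Finv (INR k ^ a).

Lemma Finv_pow_spec k : (1 <= k)%nat -> 1 <= Finv_pow k /\ Froot a (Finv_pow k) = INR k.
Proof.
  intros Hk. assert (Hk1 : 1 <= INR k) by (apply (le_INR 1); lia).
  destruct (HFinv (INR k ^ a)) as [H1 H2]; [now apply pow_R1_Rle |].
  split; [easy |]. unfold Froot, Finv_pow. rewrite H2, ln_pow by lra.
  pose proof (INR_ge_1 a Ha).
  replace (INR a * ln (INR k) / INR a) with (ln (INR k)) by (field; lra).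
  apply exp_ln. lra.
Qed.

Lemma Finv_pow_le_iff k t : (1 <= k)%nat -> 1 <= t -> Finv_pow k <= t <-> INR k <= Froot a t.
Proof.
  intros Hk Ht. destruct (Finv_pow_spec k Hk) as [Hk1 Hroot].
  rewrite <- Hroot. symmetry. now apply Froot_le_iff.
Qed.

Lemma le_Finv_pow_iff k t : (1 <= k)%nat -> 1 <= t -> t <= Finv_pow k <-> Froot a t <= INR k.
Proof.
  intros Hk Ht. destruct (Finv_pow_spec k Hk) as [Hk1 Hroot].
  rewrite <- Hroot. symmetry. now apply Froot_le_iff.
Qed.

Lemma Finv_pow_le k l : (1 <= k <= l)%nat -> Finv_pow k <= Finv_pow l.
Proof.
  intros Hkl. destruct (Finv_pow_spec l) as [Hl1 Hl2]; [lia |].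
  apply Finv_pow_le_iff; [lia | easy |]. rewrite Hl2. apply le_INR. lia.
Qed.

Lemma Finv_pow_unbounded t : exists N, (1 <= N)%nat /\ forall n, (N <= n)%nat -> t <= Finv_pow n.
Proof.
  destruct (INR_unbounded (Froot a (Rmax t 1))) as [N HN].
  exists (Nat.max N 1). split; [lia |]. intros n Hn.
  apply (Rle_trans _ (Rmax t 1)); [apply Rmax_l |].
  apply le_Finv_pow_iff; [lia | apply Rmax_r |].
  assert (INR N <= INR n) by (apply le_INR; lia). lra.
Qed.

Lemma Finv_pow_steps_small d : 0 < d ->
  exists N, forall n, (N <= n)%nat -> Finv_pow (S n) < Finv_pow n + d.
Proof.
  intros Hd. destruct (Froot_gap_eventually a Ha d Hd) as [X HX].
  destruct (Finv_pow_unbounded X) as [N [HN1 HN]].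
  exists N. intros n Hn.
  destruct (Finv_pow_spec n) as [Hx1 Hxn]; [lia |].
  destruct (Finv_pow_spec (S n)) as [Hy1 Hyn]; [lia |].
  destruct (Rlt_le_dec (Finv_pow (S n)) (Finv_pow n + d)) as [| Hge]; [easy | exfalso].
  pose proof (HX (Finv_pow n) (HN n Hn)) as Hgap.
  apply (Froot_le_iff a Ha) in Hge; [| lra | easy].
  rewrite Hxn in Hgap. rewrite Hyn, S_INR in Hge. lra.
Qed.

Lemma Finv_pow_floor n : (1 <= n)%nat -> exists m, (1 <= m)%nat /\
  INR m <= Finv_pow n < INR m + 1 /\ mpart Finv a n = INR m /\ ppart Finv a n = Finv_pow n - INR m.
Proof.
  intros Hn. destruct (Finv_pow_spec n Hn) as [Hx1 _].
  destruct (nat_floor_exists _ Hx1) as [m [Hm1 Hm]].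
  destruct (Int_part_fracp_nat m _ Hm) as [Hint Hfrac].
  exists m. repeat split; easy.
Qed.

Lemma count_le_blocks beta n m : 0 <= beta < 1 -> (1 <= n)%nat -> Finv_pow n < INR m + 1 ->
  INR (count_le Finv a beta n)
  = sumR (fun j => sumR (fun k => ind_Icc (Froot a (INR j)) (Froot a (INR j + beta)) (INR k))
                        (seq 1 n)) (seq 1 m).
Proof.
  intros Hb Hn Hm. unfold count_le. rewrite length_filter_sumR.
  rewrite (sumR_ext _
    (fun k => sumR (fun j => ind_Icc (INR j) (INR j + beta) (Finv_pow k)) (seq 1 m))).
  - rewrite sumR_swap. apply sumR_ext. intros j Hj. apply sumR_ext. intros k Hk.
    apply in_seq in Hj, Hk. assert (1 <= INR j) by (apply (le_INR 1); lia).
    apply ind_Icc_iff; [apply le_Finv_pow_iff | apply Finv_pow_le_iff]; (lia || lra).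
  - intros k Hk. apply in_seq in Hk.
    destruct (Finv_pow_spec k) as [Hk1 _]; [lia |].
    pose proof (Finv_pow_le k n ltac:(lia)).
    rewrite <- fracp_indicator_blocks by (easy || lra). unfold Finv_pow.
    now destruct (Rle_dec _ _).
Qed.

Lemma count_le_approx beta n m : 0 <= beta < 1 -> (1 <= n)%nat -> (1 <= m)%nat ->
  INR m <= Finv_pow n < INR m + 1 ->
  Rabs (INR (count_le Finv a beta n)
        - sumR (fun j => Froot a (Rmin (Finv_pow n) (INR j + beta)) - Froot a (INR j)) (seq 1 m))
  <= INR m.
Proof.
  intros Hb Hn Hm Hx. destruct (Finv_pow_spec n Hn) as [Hx1 Hxn].
  rewrite (count_le_blocks beta n m) by (easy || lra).
  eapply Rle_trans; [apply (sumR_dist _ _ _ 1) | rewrite length_seq; lra].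
  intros j Hj. apply in_seq in Hj.
  assert (Hj1 : 1 <= INR j) by (apply (le_INR 1); lia).
  assert (Hjm : INR j <= INR m) by (apply le_INR; lia).
  rewrite (Froot_min a Ha), Hxn by lra.
  apply count_Icc.
  - split; [apply exp_pos | apply (Froot_le_iff a Ha); lra].
  - rewrite <- Hxn. apply (Froot_le_iff a Ha); lra.
Qed.

Lemma count_le_main_error beta n m : 0 <= beta < 1 -> (1 <= n)%nat -> (1 <= m)%nat ->
  INR m <= Finv_pow n < INR m + 1 ->
  Rabs (INR (count_le Finv a beta n) - main_rate s beta (Finv_pow n - INR m) * INR n)
  <= INR m * (1 + 5 * c).
Proof.
  intros Hb Hn Hm Hx. destruct (Finv_pow_spec n Hn) as [Hx1 Hxn].
  pose proof (count_le_approx beta n m Hb Hn Hm Hx) as Hcount.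
  set (x := Finv_pow n) in *.
  destruct (Froot_rate_bounds a Ha) as [Hs _]. fold s in Hs.
  pose proof (Froot_coef_pos a) as Hc. fold c in Hc.
  assert (Hexp :
    Rabs (sumR (fun j => Froot a (Rmin x (INR j + beta)) - Froot a (INR j)) (seq 1 m)
          - sumR (fun j => c * (exp (s * Rmin x (INR j + beta)) - exp (s * INR j))) (seq 1 m))
    <= INR m * (2 * c)).
  { eapply Rle_trans; [apply sumR_dist | rewrite length_seq; apply Rle_refl].
    intros j Hj. apply in_seq in Hj.
    assert (Hj1 : 1 <= INR j) by (apply (le_INR 1); lia).
    assert (Hmin : 1 <= Rmin x (INR j + beta)) by (apply Rmin_glb; lra).
    pose proof (Froot_approx a Ha _ Hmin) as E1. pose proof (Froot_approx a Ha _ Hj1) as E2.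
    apply Rabs_le_between in E1, E2. fold s c in E1, E2. apply Rabs_le. lra. }
  rewrite sumR_scal, (sum_exp_blocks s beta Hs m x Hm Hx ltac:(lra)) in Hexp.
  pose proof (Froot_approx a Ha x Hx1) as Hn_approx.
  rewrite Hxn in Hn_approx. fold s c in Hn_approx.
  pose proof (main_rate_range s beta Hs ltac:(lra) (x - INR m) ltac:(lra)) as HM.
  pose proof (rr_rate_bounds s beta Hs ltac:(lra)) as [Hr0 HX1].
  pose proof (exp_Froot_rate_bounds a Ha) as Hes. fold s in Hes. pose proof phi_bounds.
  set (M := main_rate s beta (x - INR m)) in *. set (r := rr_rate s beta) in *.
  assert (1 <= exp (s * (1 - beta))) by (apply exp_ge_1; nra).
  assert (Hr1 : r <= 1) by nra.
  assert (Hre : 0 <= r * exp s <= 2) by (split; nra).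
  assert (Hcr : 0 <= c * r * exp s <= 2 * c) by (rewrite Rmult_assoc; split; nra).
  assert (HMn : Rabs (M * (INR n - c * exp (s * x))) <= c).
  { rewrite Rabs_mult, Rabs_right by lra. apply Rabs_le_between in Hn_approx.
    apply (Rle_trans _ (1 * c)); [| lra].
    apply Rmult_le_compat; [lra | apply Rabs_pos | lra | apply Rabs_le; lra]. }
  assert (c <= INR m * c) by (assert (1 <= INR m) by (apply (le_INR 1); lia); nra).
  apply Rabs_le_between in Hcount, Hexp, HMn. apply Rabs_le. lra.
Qed.

Lemma Pn_error beta n m : 0 <= beta < 1 -> (1 <= n)%nat -> (1 <= m)%nat ->
  INR m <= Finv_pow n < INR m + 1 ->
  Rabs (Pn Finv a beta n - main_rate s beta (Finv_pow n - INR m))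
  <= 2 * (1 + 5 * c) / c * INR m * exp (- (s * INR m)).
Proof.
  intros Hb Hn Hm Hx. destruct (Finv_pow_spec n Hn) as [Hx1 Hxn].
  pose proof (count_le_main_error beta n m Hb Hn Hm Hx) as Herr.
  destruct (Froot_rate_bounds a Ha) as [Hs _]. fold s in Hs.
  pose proof (Froot_coef_pos a) as Hc. fold c in Hc.
  assert (Hlow : c * exp (s * INR m) / 2 <= INR n).
  { rewrite <- Hxn. eapply Rle_trans; [| apply (Froot_lower a Ha _ Hx1)].
    assert (exp (s * INR m) <= exp (s * Finv_pow n)) by (apply exp_le_exp; nra).
    fold s c. nra. }
  pose proof (exp_pos (s * INR m)).
  set (M := main_rate s beta (Finv_pow n - INR m)) in *.
  assert (Hn0 : 0 < INR n) by (apply lt_0_INR; lia).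
  unfold Pn. replace (INR (count_le Finv a beta n) / INR n - M)
    with ((INR (count_le Finv a beta n) - M * INR n) / INR n) by (field; lra).
  unfold Rdiv at 1. rewrite Rabs_mult, Rabs_inv, (Rabs_right (INR n)) by lra.
  rewrite exp_Ropp.
  apply (Rmult_le_reg_r (INR n)); [easy |].
  rewrite Rmult_assoc, Rinv_l, Rmult_1_r by lra.
  eapply Rle_trans; [exact Herr |].
  apply (Rle_trans _ (2 * (1 + 5 * c) / c * INR m * / exp (s * INR m) * (c * exp (s * INR m) / 2))).
  - right. field. lra.
  - apply Rmult_le_compat_l; [| easy].
    assert (0 <= INR m) by apply pos_INR.
    apply Rmult_le_pos; [apply Rmult_le_pos |]; [| easy | left; now apply Rinv_0_lt_compat].
    apply Rdiv_le_0_compat; lra.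
Qed.

Lemma Pn_main_term_error beta n : 0 <= beta <= 1 -> (1 <= n)%nat ->
  Rabs (Pn Finv a beta n - main_term Finv a beta n)
  <= 2 * (1 + 5 * c) / c * mpart Finv a n * Rpower phi (- mpart Finv a n / INR a).
Proof.
  intros Hb Hn. destruct (Finv_pow_floor n Hn) as [m [Hm1 [Hm [-> Hp]]]].
  rewrite main_term_main_rate, Hp, Rpower_phi_div by easy.
  replace (Froot_rate a * - INR m) with (- (s * INR m)) by (unfold s; ring).
  destruct (Rlt_le_dec beta 1) as [Hb1 | Hb1].
  - apply Pn_error; easy || lra.
  - destruct (Froot_rate_bounds a Ha).
    replace beta with 1 by lra. rewrite Pn_beta_1, main_rate_beta_1 by (easy || lra).
    rewrite Rminus_diag, Rabs_R0. pose proof (Froot_coef_pos a) as Hc. fold c in Hc.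
    pose proof (pos_INR m).
    apply Rmult_le_pos; [apply Rmult_le_pos; [apply Rdiv_le_0_compat |] | left; apply exp_pos]; lra.
Qed.

Lemma Pn_sub_main_term_vanishes beta : 0 <= beta <= 1 -> forall e, 0 < e ->
  exists N, forall n, (N <= n)%nat -> Rabs (Pn Finv a beta n - main_term Finv a beta n) < e.
Proof.
  intros Hb e He. destruct (Froot_rate_bounds a Ha) as [Hs _]. fold s in Hs.
  pose proof (Froot_coef_pos a) as Hc. fold c in Hc.
  set (C' := 2 * (1 + 5 * c) / c).
  assert (HC' : 0 < C') by (unfold C'; apply Rdiv_lt_0_compat; lra).
  set (K := 4 * C' / (s * s * e)).
  assert (HK : 0 < K) by (unfold K; apply Rdiv_lt_0_compat; [lra | apply Rmult_lt_0_compat; nra]).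
  destruct (Finv_pow_unbounded (K + 1)) as [N [HN1 HN]].
  exists N. intros n Hn.
  destruct (Finv_pow_floor n ltac:(lia)) as [m [Hm1 [Hm [Hmp _]]]].
  specialize (HN n Hn). assert (HKm : K < INR m) by lra.
  eapply Rle_lt_trans; [apply Pn_main_term_error; easy || lia |].
  rewrite Hmp, Rpower_phi_div by easy. fold s.
  replace (s * - INR m) with (- (s * INR m)) by ring.
  assert (Hm0 : 0 < INR m) by lra.
  pose proof (mul_exp_neg_bound s (INR m) Hs Hm0) as Hbound.
  assert (0 <= INR m * exp (- (s * INR m))) by (pose proof (exp_pos (- (s * INR m))); nra).
  assert (C' * (4 / (s * s * INR m)) < e).
  { apply (Rmult_lt_reg_r (s * s * INR m)); [apply Rmult_lt_0_compat; nra |].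
    replace (C' * (4 / (s * s * INR m)) * (s * s * INR m)) with (4 * C') by (field; nra).
    assert (E : K * (s * s * e) = 4 * C') by (unfold K; field; nra).
    assert (K * (s * s * e) < INR m * (s * s * e)) by (apply Rmult_lt_compat_r; [nra | easy]).
    nra. }
  assert (C' * (INR m * exp (- (s * INR m))) <= C' * (4 / (s * s * INR m)))
    by (apply Rmult_le_compat_l; lra).
  fold C'. rewrite Rmult_assoc. lra.
Qed.

(* Since the steps [Finv_pow (S n) - Finv_pow n] tend to 0 while [Finv_pow n] tends to
   infinity, the first [n] with [Finv_pow n >= i + theta] lands in [[i + theta, i + theta + d)]. *)
Lemma ppart_frequently theta d : 0 <= theta -> 0 < d -> theta + d <= 1 ->
  forall N, exists n, (N <= n)%nat /\ theta <= ppart Finv a n < theta + d.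
Proof.
  intros Ht Hd Htd N.
  destruct (Finv_pow_steps_small d Hd) as [N1 HN1].
  set (N0 := Nat.max N (Nat.max N1 1)).
  destruct (Finv_pow_floor N0 ltac:(lia)) as [i [_ [Hi _]]].
  set (tau := INR (S i) + theta).
  destruct (Finv_pow_unbounded tau) as [N2 [_ HN2]].
  destruct (first_crossing Finv_pow tau N0 (Nat.max N0 N2)) as [n [Hn [Hlt Hge]]].
  - lia.
  - split; [unfold tau; rewrite S_INR; lra | apply HN2; lia].
  - assert (Hstep : Finv_pow n < tau + d).
    { replace n with (S (pred n)) by lia. eapply Rlt_le_trans; [apply HN1; lia |].
      replace (S (pred n)) with n by lia. lra. }
    exists n. split; [lia |].
    destruct (Int_part_fracp_nat (S i) (Finv_pow n)) as [_ Hfrac];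
      [unfold tau in *; rewrite S_INR in *; lra |].
    unfold ppart. fold (Finv_pow n). rewrite Hfrac. unfold tau in *. lra.
Qed.

Lemma Pn_LimSup beta : 0 <= beta <= 1 ->
  is_LimSup_seq (Pn Finv a beta) (rr a beta * Rpower phi (1 / INR a - beta / INR a)).
Proof.
  intros Hb. destruct (Froot_rate_bounds a Ha) as [Hs _]. fold s in Hs.
  rewrite rr_rr_rate, Rpower_phi_1_sub_div by easy. fold s.
  apply (is_LimSup_seq_approx _ (main_term Finv a beta)).
  - now apply Pn_sub_main_term_vanishes.
  - intros n. rewrite main_term_main_rate by easy.
    apply main_rate_range; [easy | easy | pose proof (ppart_bounds Finv a n); lra].
  - intros e He N. destruct (Rlt_le_dec beta 1) as [Hb1 | Hb1].
    + set (d := Rmin (1 - beta) (e / (2 * s))).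
      assert (Hd : 0 < d /\ d <= 1 - beta /\ s * d <= e / 2).
      { unfold d, Rmin. assert (0 < e / (2 * s)) by (apply Rdiv_lt_0_compat; lra).
        assert (s * (e / (2 * s)) = e / 2) by (field; lra).
        destruct (Rle_dec _ _); repeat split; nra. }
      destruct (ppart_frequently beta d ltac:(lra) ltac:(lra) ltac:(lra) N) as [n [Hn Hp]].
      exists n. split; [easy |]. rewrite main_term_main_rate by easy. fold s.
      pose proof (main_rate_near_beta s beta Hs Hb _ _ Hp). lra.
    + exists N. split; [easy |]. replace beta with 1 by lra.
      rewrite main_term_main_rate, main_rate_beta_1 by (easy || apply ppart_bounds).
      assert (Hr1 : rr_rate s 1 = 1).
      { unfold rr_rate. rewrite Rmult_1_r. pose proof (exp_rate_gt_1 s Hs). field. lra. }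
      rewrite Hr1, Rminus_diag, Rmult_0_r, exp_0. lra.
Qed.

Lemma Pn_LimInf beta : 0 <= beta <= 1 -> is_LimInf_seq (Pn Finv a beta) (rr a beta).
Proof.
  intros Hb. destruct (Froot_rate_bounds a Ha) as [Hs Hsl]. fold s in Hs, Hsl.
  pose proof ln_phi_bounds.
  rewrite rr_rr_rate by easy. fold s.
  apply (is_LimInf_seq_approx _ (main_term Finv a beta)).
  - now apply Pn_sub_main_term_vanishes.
  - intros n. rewrite main_term_main_rate by easy.
    apply main_rate_range; [easy | easy | pose proof (ppart_bounds Finv a n); lra].
  - intros e He N.
    set (d := Rmin (1 / 2) (e / (4 * s))).
    assert (Hd : 0 < d /\ d <= 1 / 2 /\ s * d <= e / 4).
    { unfold d, Rmin. assert (0 < e / (4 * s)) by (apply Rdiv_lt_0_compat; lra).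
      assert (s * (e / (4 * s)) = e / 4) by (field; lra).
      destruct (Rle_dec _ _); repeat split; nra. }
    destruct (ppart_frequently 0 d ltac:(lra) ltac:(lra) ltac:(lra) N) as [n [Hn Hp]].
    exists n. split; [easy |]. rewrite main_term_main_rate by easy. fold s.
    assert (s * d <= 1 / 2) by nra.
    pose proof (main_rate_near_0 s beta Hs Hb _ _ Hp). lra.
Qed.

End Counting.

Theorem theorem4p10 (beta : R) (hb0 : 0 <= beta) (hb1 : beta <= 1) :
  (forall (a : nat), (0 < a)%nat ->
   forall (Finv : R -> R),
     (forall y, 1 <= y -> 1 <= Finv y /\ Ffib (Finv y) = y) ->
     (exists C : R, forall n : nat, (1 < n)%nat ->
        Rabs (Pn Finv a beta n - main_term Finv a beta n)
          <= C * mpart Finv a n * Rpower phi (- mpart Finv a n / INR a))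
     /\ is_LimSup_seq (Pn Finv a beta)
          (Finite (rr a beta * Rpower phi (1 / INR a - beta / INR a)))
     /\ is_LimInf_seq (Pn Finv a beta) (Finite (rr a beta)))
  /\
  (exists C : R, forall (a : nat), (0 < a)%nat ->
     Rabs (rr a beta * Rpower phi (1 / INR a - beta / INR a) - beta) <= C / INR a
     /\ Rabs (rr a beta - beta) <= C / INR a).
Proof.
  split.
  - intros a Ha Finv HFinv. split; [| split].
    + exists (2 * (1 + 5 * Froot_coef a) / Froot_coef a). intros n Hn.
      apply Pn_main_term_error; (easy || lia || lra).
    + apply Pn_LimSup; easy || lra.
    + apply Pn_LimInf; easy || lra.
  - exists (2 * ln phi). intros a Ha.
    rewrite rr_rr_rate, Rpower_phi_1_sub_div by easy.
    replace (2 * ln phi / INR a) with (2 * Froot_rate a)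
      by (unfold Froot_rate; field; apply not_0_INR; lia).
    pose proof (exp_Froot_rate_bounds a Ha). pose proof phi_bounds.
    apply rr_rate_near_beta; [apply Froot_rate_bounds | | lra]; easy || lra.
Qed.
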